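(* Let $V:[0,+\infty)\to[0,+\infty)$ be a $C^1$ strictly increasing function with $\lim_{t\to\infty}V(t)=+\infty$, and let $S:=V'$. Let $(a_n)_{n\in\mathbb N}$ be a strictly decreasing sequence converging to $0$, and let $f:(0,+\infty)\to\mathbb R$ be a positive increasing $C^2$ function such that $\lim_{s\to\infty}f(s)=+\infty$, and such that for every $r>1$: $\lim_{s\to\infty}\frac{s f'(s)}{[f(s)]^r}=0$ and $s\mapsto\frac{f'(s)}{[f(s)]^r}$ is strictly decreasing. Define $\tilde\rho_n:(0,+\infty)\to\mathbb R$ by \[ \tilde\rho_n(t):=\frac{a_n\,f'(V(t))}{[f(V(t))]^{a_n+1}}. \] Then the functions $\tilde\rho_n$ belong to $C^1(0,+\infty)$, are strictly decreasing, and satisfy: (i) $\lim_{n\to\infty}\tilde\rho_n(r)=0$ for all $r>0$ and $\lim_{r\to+\infty}\tilde\rho_n(r)V(r)=0$ for all $n$; (ii) for all $n>m$, $r\mapsto\tilde\rho_n(r)/\tilde\rho_m(r)$ is non-decreasing on $(0,+\infty)$; (iii) $\lim_{R\to+\infty}\lim_{n\to\infty}\int_R^{+\infty}S(r)\tilde\rho_n(r)\,\mathrm dr=1$. Consequently, on any metric measure space $(X,\mathsf d,\mathfrak m)$ the mollifiers $\rho_n(x,y):=\tilde\rho_n(\mathsf d(x,y))$, $x\neq y$, satisfy approximation of the identity of radial type associated to $V$.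
   Context: Approximation of the identity of radial type associated to $V$ for functions $\rho_n$ on $\{(x,y)\in X\times X:x\neq y\}$ means: there are strictly decreasing $\tilde\rho_n\in C^1(0,+\infty)$ with $\rho_n(x,y)=\tilde\rho_n(\mathsf d(x,y))$ satisfying properties (i), (ii), (iii) listed in the claim. *)

From Stdlib Require Import Reals.
From Coquelicot Require Import Coquelicot.
Open Scope R_scope.

Definition C1_pos (g : R -> R) : Prop :=
  forall t, 0 < t -> ex_derive g t /\ continuous (Derive g) t.

Definition C2_pos (g : R -> R) : Prop :=
  forall t, 0 < t -> ex_derive g t /\ ex_derive (Derive g) t
                    /\ continuous (Derive (Derive g)) t.

Definition C1_nonneg (g : R -> R) : Prop :=
  C1_pos g /\
  exists S0 : R,
    filterlim (fun h => (g h - g 0) / h) (at_right 0) (locally S0) /\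
    filterlim (Derive g) (at_right 0) (locally S0).

(* The properties of the radial profiles rt n : (0,+oo) -> R required in
   "approximation of the identity of radial type associated to V"
   (with S = V' = Derive V). *)
Definition radial_profiles (V : R -> R) (rt : nat -> R -> R) : Prop :=
  (forall n, C1_pos (rt n)) /\
  (forall n s t, 0 < s -> s < t -> rt n t < rt n s) /\
  (forall r, 0 < r -> is_lim_seq (fun n => rt n r) 0) /\
  (forall n, is_lim (fun r => rt n r * V r) p_infty 0) /\
  (forall n m, (m < n)%nat -> forall r1 r2, 0 < r1 -> r1 <= r2 ->
       rt n r1 / rt m r1 <= rt n r2 / rt m r2) /\
  (exists (I : R -> nat -> R) (L : R -> R),
     (forall Rr n, 0 < Rr ->
        is_RInt_gen (fun r => Derive V r * rt n r)
                    (at_point Rr) (Rbar_locally p_infty) (I Rr n)) /\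
     (forall Rr, 0 < Rr -> is_lim_seq (I Rr) (L Rr)) /\
     is_lim L p_infty 1).

Definition is_metric {X : Type} (d : X -> X -> R) : Prop :=
  (forall x y, 0 <= d x y) /\
  (forall x y, d x y = 0 <-> x = y) /\
  (forall x y, d x y = d y x) /\
  (forall x y z, d x z <= d x y + d y z).

Definition approx_identity_radial {X : Type} (d : X -> X -> R) (V : R -> R)
  (rho : nat -> X -> X -> R) : Prop :=
  exists rt : nat -> R -> R,
    radial_profiles V rt /\
    (forall n x y, x <> y -> rho n x y = rt n (d x y)).

(* With [g_c s = c f'(s) / f(s)^(c+1) = d/ds (- f(s)^(-c))] the profiles are
   [g_(a n) o V].  Hence [V' (g_c o V)] has the antiderivative [- f(V)^(-c)],
   which vanishes at infinity, so the tail integral from [R] is [f(V R)^(-c)],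
   and this tends to 1 as [c = a n -> 0].  Strict decrease is the hypothesis
   that [f'/f^r] decreases, with [r = c + 1 > 1]; the ratio
   [g_c / g_d = (c/d) f^(d-c)] is nondecreasing because [f] is; and
   [V (g_c o V) -> 0] is the hypothesis [s f'(s) / f(s)^r -> 0]. *)

From Stdlib Require Import Reals Lra Lia.
From Coquelicot Require Import Coquelicot.
Open Scope R_scope.

Lemma strictly_decreasing_seq_lt (a : nat -> R) :
  (forall n, a (S n) < a n) -> forall m n, (m < n)%nat -> a n < a m.
Proof.
intros Hdec m n Hmn; induction Hmn as [|n _ IH].
- apply Hdec.
- specialize (Hdec n); lra.
Qed.

Lemma strictly_decreasing_lim0_pos (a : nat -> R) :
  (forall n, a (S n) < a n) -> is_lim_seq a 0 -> forall n, 0 < a n.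
Proof.
intros Hdec Hlim n.
assert (Hle : Rbar_le 0 (a (S n))).
{ apply (is_lim_seq_le_loc a (fun _ => a (S n))); [|exact Hlim|apply is_lim_seq_const].
  exists (S n); intros k Hk.
  destruct (Nat.eq_dec k (S n)) as [->|Hne]; [lra|].
  left; apply strictly_decreasing_seq_lt; [exact Hdec|lia]. }
simpl in Hle; specialize (Hdec n); lra.
Qed.

Lemma Derive_nonneg_of_nondecreasing (g : R -> R) (s : R) :
  (forall t, s <= t -> g s <= g t) -> ex_derive g s -> 0 <= Derive g s.
Proof.
intros Hmon Hd.
destruct (Rle_or_lt 0 (Derive g s)) as [Hpos|Hneg]; [exact Hpos|exfalso].
pose proof (proj1 (is_derive_Reals _ _ _) (Derive_correct g s Hd)) as Hlim.
destruct (Hlim (- Derive g s) ltac:(lra)) as [del Hdel].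
pose proof (cond_pos del) as Hdel_pos.
assert (Hq : 0 <= (g (s + del / 2) - g s) / (del / 2)).
{ apply Rdiv_le_0_compat; [|lra]. pose proof (Hmon (s + del / 2)); lra. }
specialize (Hdel (del / 2) ltac:(lra) ltac:(rewrite Rabs_pos_eq; lra)).
rewrite Rabs_pos_eq in Hdel; lra.
Qed.

Lemma continuous_Derive_of_is_derive (g g' : R -> R) (a t : R) :
  (forall s, a < s -> is_derive g s (g' s)) ->
  (forall s, a < s -> continuous g' s) -> a < t -> continuous (Derive g) t.
Proof.
intros Hd Hc Ht; apply (continuous_ext_loc _ g'); [|auto].
apply (locally_interval _ t a p_infty); simpl; auto.
intros s Hs _; symmetry; apply is_derive_unique, Hd, Hs.
Qed.

Lemma C1_pos_intro (g g' : R -> R) :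
  (forall t, 0 < t -> is_derive g t (g' t)) ->
  (forall t, 0 < t -> continuous g' t) -> C1_pos g.
Proof.
intros Hd Hc t Ht; split; [exists (g' t); auto|].
apply (continuous_Derive_of_is_derive g g' 0); assumption.
Qed.

Lemma C1_pos_continuous (g : R -> R) (t : R) : C1_pos g -> 0 < t -> continuous g t.
Proof. intros Hg Ht; apply (ex_derive_continuous g), Hg, Ht. Qed.

Lemma C1_pos_of_C2_pos (g : R -> R) : C2_pos g -> C1_pos g.
Proof.
intros Hg t Ht; destruct (Hg t Ht) as (Hd & Hdd & _).
split; [exact Hd|apply (ex_derive_continuous (Derive g)), Hdd].
Qed.

Lemma C1_pos_Derive_of_C2_pos (g : R -> R) : C2_pos g -> C1_pos (Derive g).
Proof. intros Hg t Ht; destruct (Hg t Ht) as (_ & Hdd & Hc); split; assumption. Qed.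

Lemma C1_pos_const (c : R) : C1_pos (fun _ => c).
Proof.
apply (C1_pos_intro _ (fun _ => 0)).
- intros t _; auto_derive; reflexivity.
- intros t _; apply continuous_const.
Qed.

Lemma C1_pos_mult (g h : R -> R) : C1_pos g -> C1_pos h -> C1_pos (fun t => g t * h t).
Proof.
intros Hg Hh.
apply (C1_pos_intro _ (fun t => Derive g t * h t + g t * Derive h t)).
- intros t Ht; destruct (Hg t Ht) as [Hg1 _], (Hh t Ht) as [Hh1 _].
  auto_derive; [repeat split; assumption|rewrite !Rmult_1_l; reflexivity].
- intros t Ht; destruct (Hg t Ht), (Hh t Ht).
  apply (continuous_plus (fun t => Derive g t * h t) (fun t => g t * Derive h t)).
  + apply (continuous_mult (Derive g) h); [assumption|apply C1_pos_continuous; assumption].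
  + apply (continuous_mult g (Derive h)); [apply C1_pos_continuous|]; assumption.
Qed.

Lemma C1_pos_comp (g h : R -> R) :
  C1_pos g -> C1_pos h -> (forall t, 0 < t -> 0 < h t) -> C1_pos (fun t => g (h t)).
Proof.
intros Hg Hh Hpos.
apply (C1_pos_intro _ (fun t => Derive h t * Derive g (h t))).
- intros t Ht; destruct (Hg (h t) (Hpos t Ht)), (Hh t Ht).
  apply (is_derive_comp g h); apply Derive_correct; assumption.
- intros t Ht; destruct (Hg (h t) (Hpos t Ht)), (Hh t Ht).
  apply (continuous_mult (Derive h) (fun t => Derive g (h t))); [assumption|].
  apply (continuous_comp h (Derive g)); [apply C1_pos_continuous|]; auto.
Qed.

Lemma C1_pos_inv_Rpower (c : R) : C1_pos (fun u => / Rpower u c).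
Proof.
apply (C1_pos_intro _ (fun u => - c / (u * Rpower u c))).
- intros u Hu; unfold Rpower; pose proof (exp_pos (c * ln u)).
  auto_derive; [repeat split; lra|field; lra].
- intros u Hu; apply (ex_derive_continuous (fun u => - c / (u * Rpower u c))); unfold Rpower.
  pose proof (exp_pos (c * ln u)); auto_derive; repeat split; try lra.
  apply Rmult_integral_contrapositive; lra.
Qed.

Lemma is_lim_comp_p_infty (g h : R -> R) (l : Rbar) :
  is_lim g p_infty l -> is_lim h p_infty p_infty -> is_lim (fun t => g (h t)) p_infty l.
Proof.
intros Hg Hh; apply (is_lim_comp g h p_infty l p_infty); auto.
exists 0; intros; discriminate.
Qed.

Lemma is_lim_Rpower_neg (c : R) : 0 < c -> is_lim (fun x => Rpower x (- c)) p_infty 0.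
Proof.
intros Hc; apply (is_lim_comp exp (fun x => - c * ln x) p_infty 0 m_infty).
- apply is_lim_exp_m.
- replace m_infty with (Rbar_mult (- c) p_infty).
  + apply is_lim_scal_l, is_lim_ln_p.
  + simpl; destruct (Rle_dec 0 (- c)); [exfalso; lra|reflexivity].
- exists 0; intros; discriminate.
Qed.

Lemma is_lim_seq_Rpower_exponent (x : R) (u : nat -> R) (l : R) :
  is_lim_seq u l -> is_lim_seq (fun n => Rpower x (u n)) (Rpower x l).
Proof.
intros Hu; apply (is_lim_seq_continuous (Rpower x)); [|exact Hu].
apply continuity_pt_filterlim, (ex_derive_continuous (Rpower x)).
unfold Rpower; auto_derive; trivial.
Qed.

Lemma is_RInt_gen_p_infty_of_derive (G g : R -> R) (a0 a l : R) :
  a0 < a -> (forall t, a0 < t -> is_derive G t (g t)) ->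
  (forall t, a0 < t -> continuous g t) -> is_lim G p_infty l ->
  is_RInt_gen g (at_point a) (Rbar_locally p_infty) (l - G a).
Proof.
intros Ha HG Hg Hlim.
assert (Hbetween : forall P : R -> Prop, (forall t, a0 < t -> P t) ->
  filter_prod (at_point a) (Rbar_locally p_infty)
    (fun ab => forall x, Rmin (fst ab) (snd ab) <= x <= Rmax (fst ab) (snd ab) -> P x)).
{ intros P HP; apply (Filter_prod _ _ _ (fun x => x = a) (fun b => a < b)).
  - reflexivity.
  - exists a; auto.
  - intros x b -> Hb t Ht; simpl in Ht; rewrite Rmin_left in Ht by lra; apply HP; lra. }
apply (is_RInt_gen_ext (Derive G)).
- eapply filter_imp; [|apply (Hbetween (fun x => Derive G x = g x))].
  + intros ab Hab x Hx; apply Hab; split; apply Rlt_le, Hx.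
  + intros t Ht; apply is_derive_unique, HG, Ht.
- apply is_RInt_gen_Derive.
  + apply Hbetween; intros t Ht; exists (g t); apply HG, Ht.
  + apply Hbetween; intros t Ht; apply (continuous_Derive_of_is_derive G g a0); assumption.
  + intros P HP; apply (locally_singleton _ _ HP).
  + exact Hlim.
Qed.

Section Mollifier.

Variables f V : R -> R.

Hypothesis Hfpos : forall s, 0 < s -> 0 < f s.
Hypothesis Hfinc : forall s t, 0 < s -> s <= t -> f s <= f t.
Hypothesis HfC2 : C2_pos f.
Hypothesis Hflim : is_lim f p_infty p_infty.
Hypothesis Hfr1 : forall r, 1 < r ->
  is_lim (fun s => s * Derive f s / Rpower (f s) r) p_infty 0.
Hypothesis Hfr2 : forall r, 1 < r -> forall s t, 0 < s -> s < t ->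
  Derive f t / Rpower (f t) r < Derive f s / Rpower (f s) r.

Hypothesis HVC1 : C1_pos V.
Hypothesis HVpos : forall t, 0 < t -> 0 < V t.
Hypothesis HVinc : forall s t, 0 < s -> s < t -> V s < V t.
Hypothesis HVlim : is_lim V p_infty p_infty.

Definition profile (c s : R) : R := c * Derive f s / Rpower (f s) (c + 1).

Lemma C1_pos_profile (c : R) : C1_pos (profile c).
Proof.
exact (C1_pos_mult _ _
  (C1_pos_mult _ _ (C1_pos_const c) (C1_pos_Derive_of_C2_pos f HfC2))
  (C1_pos_comp _ f (C1_pos_inv_Rpower (c + 1)) (C1_pos_of_C2_pos f HfC2) Hfpos)).
Qed.

Lemma is_derive_neg_Rpower_f (c s : R) :
  0 < s -> is_derive (fun s => - Rpower (f s) (- c)) s (profile c s).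
Proof.
intros Hs; destruct (HfC2 s Hs) as [Hf1 _]; pose proof (Hfpos s Hs) as Hfs.
unfold profile, Rpower; auto_derive; [repeat split; assumption|].
change (fun x => f x) with f.
replace ((c + 1) * ln (f s)) with (- (- c * ln (f s)) + ln (f s)) by ring.
rewrite exp_plus, exp_ln, exp_Ropp by exact Hfs.
pose proof (exp_pos (- c * ln (f s))); field; lra.
Qed.

Lemma profile_strictly_decreasing (c s t : R) :
  0 < c -> 0 < s -> s < t -> profile c t < profile c s.
Proof.
intros Hc Hs Hst; unfold profile, Rdiv; rewrite !Rmult_assoc.
apply Rmult_lt_compat_l; [exact Hc|apply (Hfr2 (c + 1)); lra].
Qed.

Lemma Derive_f_pos (s : R) : 0 < s -> 0 < Derive f s.
Proof.
(* [f'(s) / f(s)^2 > f'(s+1) / f(s+1)^2 >= 0]. *)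
intros Hs.
assert (Hnext : 0 <= Derive f (s + 1)).
{ apply Derive_nonneg_of_nondecreasing; [|apply HfC2; lra].
  intros t Ht; apply Hfinc; lra. }
pose proof (Hfr2 2 ltac:(lra) s (s + 1) Hs ltac:(lra)) as Hdec.
assert (Hpow : forall x, 0 < Rpower x 2) by (intros; apply exp_pos).
pose proof (Hpow (f s)); pose proof (Hpow (f (s + 1))).
assert (Hq : 0 < Derive f s / Rpower (f s) 2).
{ apply Rle_lt_trans with (2 := Hdec), Rdiv_le_0_compat; assumption. }
replace (Derive f s) with (Derive f s / Rpower (f s) 2 * Rpower (f s) 2) by (field; lra).
apply Rmult_lt_0_compat; assumption.
Qed.

Lemma profile_ratio (c d s : R) :
  0 < s -> d <> 0 -> profile c s / profile d s = c / d * Rpower (f s) (d - c).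
Proof.
intros Hs Hd; pose proof (Derive_f_pos s Hs); unfold profile, Rpower.
replace ((d + 1) * ln (f s)) with ((d - c) * ln (f s) + (c + 1) * ln (f s)) by ring.
rewrite exp_plus.
pose proof (exp_pos ((d - c) * ln (f s))); pose proof (exp_pos ((c + 1) * ln (f s))).
field; repeat split; lra.
Qed.

Lemma profile_ratio_nondecreasing (c d s t : R) :
  0 < c -> c < d -> 0 < s -> s <= t -> profile c s / profile d s <= profile c t / profile d t.
Proof.
intros Hc Hcd Hs Hst; rewrite !profile_ratio by lra.
apply Rmult_le_compat_l; [apply Rdiv_le_0_compat; lra|].
apply Rle_Rpower_l; [lra|split; [apply Hfpos|apply Hfinc]; assumption].
Qed.

Lemma is_lim_seq_profile (u : nat -> R) (s : R) :
  is_lim_seq u 0 -> is_lim_seq (fun n => profile (u n) s) 0.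
Proof.
intros Hu.
replace (Finite 0) with (Finite (profile 0 s)) by (unfold profile, Rdiv; f_equal; ring).
apply (is_lim_seq_continuous (fun c => profile c s)); [|exact Hu].
apply continuity_pt_filterlim, (ex_derive_continuous (fun c => profile c s)).
unfold profile, Rpower; auto_derive; apply Rgt_not_eq, exp_pos.
Qed.

Lemma is_lim_profile_mul_id (c : R) : 0 < c -> is_lim (fun s => profile c s * s) p_infty 0.
Proof.
intros Hc; apply (is_lim_ext (fun s => c * (s * Derive f s / Rpower (f s) (c + 1)))).
- intros s; unfold profile, Rdiv; ring.
- replace (Finite 0) with (Rbar_mult c 0) by (simpl; rewrite Rmult_0_r; reflexivity).
  apply is_lim_scal_l, Hfr1; lra.
Qed.

Lemma C1_pos_profile_comp (c : R) : C1_pos (fun t => profile c (V t)).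
Proof. exact (C1_pos_comp _ V (C1_pos_profile c) HVC1 HVpos). Qed.

Lemma is_RInt_gen_profile_comp (c Rr : R) : 0 < c -> 0 < Rr ->
  is_RInt_gen (fun r => Derive V r * profile c (V r)) (at_point Rr) (Rbar_locally p_infty)
    (Rpower (f (V Rr)) (- c)).
Proof.
intros Hc HR.
replace (Rpower (f (V Rr)) (- c)) with (0 - - Rpower (f (V Rr)) (- c)) by ring.
apply (is_RInt_gen_p_infty_of_derive (fun t => - Rpower (f (V t)) (- c)) _ 0).
- exact HR.
- intros t Ht; apply (is_derive_comp (fun s => - Rpower (f s) (- c)) V).
  + apply is_derive_neg_Rpower_f, HVpos, Ht.
  + apply Derive_correct, HVC1, Ht.
- intros t Ht; apply (continuous_mult (Derive V) (fun t => profile c (V t))).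
  + apply HVC1, Ht.
  + apply C1_pos_continuous; [apply C1_pos_profile_comp|exact Ht].
- replace (Finite 0) with (Rbar_opp 0) by (simpl; f_equal; ring).
  apply is_lim_opp, (is_lim_comp_p_infty (fun x => Rpower x (- c))).
  + apply is_lim_Rpower_neg, Hc.
  + apply (is_lim_comp_p_infty f V); assumption.
Qed.

Lemma radial_profiles_profile (a : nat -> R) :
  (forall n, 0 < a n) -> (forall m n, (m < n)%nat -> a n < a m) -> is_lim_seq a 0 ->
  radial_profiles V (fun n t => profile (a n) (V t)).
Proof.
intros Hapos Halt Halim.
split; [|split; [|split; [|split; [|split]]]].
- intros n; apply C1_pos_profile_comp.
- intros n s t Hs Hst; apply profile_strictly_decreasing; auto.
- intros r _; apply is_lim_seq_profile, Halim.
- intros n; apply (is_lim_comp_p_infty (fun s => profile (a n) s * s) V); [|exact HVlim].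
  apply is_lim_profile_mul_id, Hapos.
- intros n m Hmn r1 r2 Hr1 Hr12; apply profile_ratio_nondecreasing; auto.
  destruct Hr12 as [Hlt| <-]; [left; apply HVinc|right]; auto.
- exists (fun Rr n => Rpower (f (V Rr)) (- a n)), (fun _ => 1); split; [|split].
  + intros Rr n HR; apply is_RInt_gen_profile_comp; auto.
  + intros Rr _.
    replace 1 with (Rpower (f (V Rr)) (- 0)) by (unfold Rpower; rewrite Ropp_0, Rmult_0_l; apply exp_0).
    apply is_lim_seq_Rpower_exponent, (is_lim_seq_opp a 0), Halim.
  + apply is_lim_const.
Qed.

End Mollifier.

Theorem mainTheorem3
  (V : R -> R) (a : nat -> R) (f : R -> R)
  (* V : [0,+oo) -> [0,+oo), C^1, strictly increasing, V(t) -> +oo *)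
  (HV0 : forall t, 0 <= t -> 0 <= V t)
  (HVC1 : C1_nonneg V)
  (HVinc : forall s t, 0 <= s -> s < t -> V s < V t)
  (HVlim : is_lim V p_infty p_infty)
  (* (a_n) strictly decreasing, converging to 0 *)
  (Hadec : forall n, a (S n) < a n)
  (Halim : is_lim_seq a 0)
  (* f : (0,+oo) -> R positive, increasing, C^2, f(s) -> +oo *)
  (Hfpos : forall s, 0 < s -> 0 < f s)
  (Hfinc : forall s t, 0 < s -> s <= t -> f s <= f t)
  (HfC2 : C2_pos f)
  (Hflim : is_lim f p_infty p_infty)
  (Hfr1 : forall r, 1 < r ->
     is_lim (fun s => s * Derive f s / Rpower (f s) r) p_infty 0)
  (Hfr2 : forall r, 1 < r -> forall s t, 0 < s -> s < t ->
     Derive f t / Rpower (f t) r < Derive f s / Rpower (f s) r) :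
  let rt := fun (n : nat) (t : R) =>
    a n * Derive f (V t) / Rpower (f (V t)) (a n + 1) in
  radial_profiles V rt /\
  (forall (X : Type) (d : X -> X -> R), is_metric d ->
     approx_identity_radial d V (fun n x y => rt n (d x y))).
Proof.
intros rt.
assert (HVpos : forall t, 0 < t -> 0 < V t).
{ intros t Ht; pose proof (HV0 0 (Rle_refl 0)); pose proof (HVinc 0 t (Rle_refl 0) Ht); lra. }
assert (Hrt : radial_profiles V rt).
{ exact (radial_profiles_profile f V Hfpos Hfinc HfC2 Hflim Hfr1 Hfr2 (proj1 HVC1) HVpos
    (fun s t Hs => HVinc s t (Rlt_le _ _ Hs)) HVlim a
    (strictly_decreasing_lim0_pos a Hadec Halim) (strictly_decreasing_seq_lt a Hadec) Halim). }
split; [exact Hrt|].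
intros X d _; exists rt; split; [exact Hrt|reflexivity].
Qed.
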